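(* Let $T$ be a tree. Then (1) $\chi_{ei}(T)=1$ if and only if $\operatorname{diam}(T)\le 2$; and (2) $\chi_{ei}(T)=2$ if and only if $\operatorname{diam}(T)\ge 3$.
   Context: All graphs are finite and simple. A path $P_4$ in $G$ is a sequence $uxyv$ of four distinct vertices with $ux,xy,yv\in E(G)$; $u$ and $v$ are its end vertices. An $e$-injective $k$-coloring of a graph $G$ is a function $f:V(G)\to\{1,\dots,k\}$ such that $f(u)\ne f(v)$ whenever $u$ and $v$ are the end vertices of some path $P_4=uxyv$ in $G$ (the coloring need not be proper). The $e$-injective chromatic number $\chi_{ei}(G)$ is the minimum positive integer $k$ such that $G$ has an $e$-injective $k$-coloring. $\operatorname{diam}(T)$ denotes the diameter of $T$. *)

From mathcomp Require Import all_boot.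
Set Implicit Arguments. Unset Strict Implicit. Unset Printing Implicit Defensive.

Definition simple_graph (T : finType) (e : rel T) : Prop :=
  symmetric e /\ irreflexive e.

Definition is_tree (T : finType) (e : rel T) : Prop :=
  [/\ simple_graph e, 0 < #|T|,
      (forall x y : T, connect e x y) &
      (forall p : seq T, uniq p -> 3 <= size p -> ~~ cycle e p)].

Definition walk_of_len (T : finType) (e : rel T) (n : nat) (x y : T) : bool :=
  [exists p : n.-tuple T, path e x p && (last x p == y)].

(* Distance: least length of a walk from x to y (= #|T| if none exists,
   which never happens in a connected graph since shortest walks are paths
   with fewer than #|T| edges). *)
Definition dist (T : finType) (e : rel T) (x y : T) : nat :=
  find (fun n => walk_of_len e n x y) (iota 0 #|T|).

Definition diam (T : finType) (e : rel T) : nat :=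
  \max_(x : T) \max_(y : T) dist e x y.

Definition P4_ends (T : finType) (e : rel T) (u v : T) : Prop :=
  exists x y : T, [/\ uniq [:: u; x; y; v], e u x, e x y & e y v].

Definition ei_coloring (T : finType) (e : rel T) (k : nat) (f : T -> nat) : Prop :=
  (forall v, 1 <= f v <= k) /\ (forall u v, P4_ends e u v -> f u <> f v).

Definition chi_ei_is (T : finType) (e : rel T) (k : nat) : Prop :=
  [/\ 0 < k, (exists f, ei_coloring e k f) &
      (forall j, 0 < j -> (exists f, ei_coloring e j f) -> k <= j)].

(* Colouring every vertex of a tree by the parity of its
   distance to a fixed root is e-injective: a tree is bipartite, so the two
   ends of a P4 lie at distance-parities of opposite kind.  Hence
   chi_ei(T) <= 2, and chi_ei(T) = 1 exactly when T contains no P4.  In a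
   tree the ends of a P4 are at odd distance, and not at distance 1 (that
   would close a 4-cycle), so at distance >= 3; conversely the first four
   vertices of a shortest path of length >= 3 form a P4.  Thus T contains a
   P4 iff diam(T) >= 3. *)
From mathcomp Require Import all_boot.
From mathcomp Require Import zify.
Set Implicit Arguments. Unset Strict Implicit. Unset Printing Implicit Defensive.

Section Distance.

Variables (T : finType) (e : rel T).

Lemma walk_of_lenP n x y :
  reflect (exists s : seq T, [/\ size s = n, path e x s & last x s = y])
          (walk_of_len e n x y).
Proof.
apply: (iffP existsP) => [[p /andP [p_path /eqP p_last]] | [s [s_size s_path s_last]]].
  by exists (tval p); rewrite size_tuple.
have /eqP s_sizeb := s_size; exists (Tuple s_sizeb).
by rewrite /= s_path s_last eqxx.
Qed.

Lemma dist_min k x y : k < #|T| -> walk_of_len e k x y -> dist e x y <= k.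
Proof.
move=> k_lt walk_k; rewrite leqNgt; apply/negP => /(before_find 0).
by rewrite nth_iota ?add0n ?walk_k.
Qed.

Lemma dist_refl x : dist e x x = 0.
Proof.
apply/eqP; rewrite -leqn0; apply: dist_min; first by apply/card_gt0P; exists x.
by apply/walk_of_lenP; exists [::].
Qed.

Lemma shortest_path x y : connect e x y ->
  exists p, [/\ path e x p, uniq (x :: p), last x p = y & size p < #|T|].
Proof.
case/connectP => p p_path ->; case: (shortenP p_path) => q q_path q_uniq _.
exists q; split => //.
by have := max_card (mem (x :: q)); rewrite (card_uniqP q_uniq).
Qed.

Lemma walk_of_len_dist x y : connect e x y -> walk_of_len e (dist e x y) x y.
Proof.
case/shortest_path => p [p_path _ p_last p_size].
have has_walk : has (fun n => walk_of_len e n x y) (iota 0 #|T|).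
  by apply/hasP; exists (size p); rewrite ?mem_iota //; apply/walk_of_lenP; exists p.
have := nth_find 0 has_walk; rewrite nth_iota ?add0n //.
by rewrite -{2}(size_iota 0 #|T|) -has_find.
Qed.

Lemma dist_le_diam x y : dist e x y <= diam e.
Proof.
apply: leq_trans (leq_bigmax x).
exact: (leq_bigmax (F := fun y => dist e x y)).
Qed.

Lemma diam_attained : 0 < #|T| -> exists x y, dist e x y = diam e.
Proof.
move=> T_gt0; have [x diam_x] := eq_bigmax (fun x => \max_y dist e x y) T_gt0.
have [y max_y] := eq_bigmax (fun y => dist e x y) T_gt0.
by exists x, y; rewrite /diam diam_x max_y.
Qed.

Lemma P4_ends_of_dist u v : connect e u v -> 3 <= dist e u v ->
  exists w, P4_ends e u w.
Proof.
move=> /shortest_path [p [p_path p_uniq p_last p_size]] dist_ge3.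
have: 3 <= size p.
  by apply: leq_trans dist_ge3 _; apply: dist_min => //; apply/walk_of_lenP; exists p.
have := take_uniq 4 p_uniq; case: p p_path {p_uniq p_last p_size} => [|a [|b [|c q]]] //=.
by case/and4P => e_ua e_ab e_bc _; rewrite take0 => uniq_uabc _; exists c, a, b.
Qed.

End Distance.

Lemma split_dup (T : eqType) (s : seq T) : ~~ uniq s ->
  exists x s0 s1 s2, s = s0 ++ x :: s1 ++ x :: s2.
Proof.
elim: s => [|y t IHt] //=; case y_t: (y \in t) => /=.
  by move=> _; case/splitPr: y_t => s1 s2; exists y, [::], s1, s2.
by case/IHt => x [s0 [s1 [s2 ->]]]; exists x, (y :: s0), s1, s2.
Qed.

(* Cutting an odd closed walk at a repeated vertex leaves two closed walks,
   one of which is odd and shorter. *)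
Lemma odd_cycle_uniq (T : eqType) (e : rel T) (s : seq T) :
  irreflexive e -> cycle e s -> odd (size s) ->
  exists q, [/\ uniq q, 3 <= size q & cycle e q].
Proof.
move=> e_irr; elim: {s}(size s).+1 {-2}s (ltnSn (size s)) => // n IHn s.
rewrite ltnS => s_size s_cycle s_odd; case: (boolP (uniq s)) => s_uniq.
  exists s; split => //; move: s_cycle s_odd s_uniq.
  by case: s {s_size} => [|a [|b [|c q]]] //=; rewrite e_irr.
case: (split_dup s_uniq) => x [s0 [s1 [s2 def_s]]].
have size_s : size s = size (x :: s1) + size (x :: s2 ++ s0).
  by rewrite def_s /= !size_cat /= !size_cat /=; lia.
move: s_cycle; rewrite -(rot_cycle (size s0)) def_s rot_size_cat /=.
rewrite -cat_rcons -catA cat_rcons rcons_cat /= -cat_rcons cat_path last_rcons.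
case/andP => cycle1 cycle2; case odd1: (odd (size (x :: s1))).
  by apply: (IHn (x :: s1)) => //; move: s_size; rewrite size_s /=; lia.
apply: (IHn (x :: s2 ++ s0)) => //; first by move: s_size; rewrite size_s /=; lia.
by move: s_odd; rewrite size_s oddD odd1.
Qed.

Section Tree.

Variables (T : finType) (e : rel T).
Hypotheses (e_sym : symmetric e) (e_irr : irreflexive e).
Hypothesis e_conn : forall x y : T, connect e x y.
Hypothesis e_acyclic : forall p : seq T, uniq p -> 3 <= size p -> ~~ cycle e p.

(* Two shortest walks from r to the ends of the edge ab, closed by ab, form a
   closed walk of length dist r a + dist r b + 1; equal parities would make it
   odd, hence contain a cycle. *)
Lemma odd_dist_adj r a b : e a b -> odd (dist e r b) = ~~ odd (dist e r a).
Proof.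
move=> e_ab; suff: odd (dist e r a) != odd (dist e r b) by do 2!case: odd.
apply/negP => /eqP same_parity.
have /walk_of_lenP [pa [pa_size pa_path pa_last]] := walk_of_len_dist (e_conn r a).
have /walk_of_lenP [pb [pb_size pb_path pb_last]] := walk_of_len_dist (e_conn r b).
have walk_cycle : cycle e (r :: pa ++ rev pb).
  rewrite /= rcons_cat cat_path pa_path /= pa_last -rev_cons (lastI r pb).
  rewrite rev_rcons pb_last /= e_ab /= -pb_last rev_path.
  by rewrite (@eq_path _ _ e) // => z w /=; rewrite e_sym.
have walk_odd : odd (size (r :: pa ++ rev pb)).
  by rewrite /= size_cat size_rev oddD pa_size pb_size same_parity addbb.
have [q [q_uniq q_size q_cycle]] := odd_cycle_uniq e_irr walk_cycle walk_odd.
by move: (e_acyclic q_uniq q_size); rewrite q_cycle.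
Qed.

Lemma parity_ei_coloring r : ei_coloring e 2 (fun v => (odd (dist e r v)).+1).
Proof.
split=> [v | u v [x [y [_ e_ux e_xy e_yv]]]]; first by case: odd.
by rewrite (odd_dist_adj r e_yv) (odd_dist_adj r e_xy) (odd_dist_adj r e_ux);
  case: odd.
Qed.

Lemma P4_ends_dist u v : P4_ends e u v -> 3 <= dist e u v.
Proof.
case=> x [y [uniq_uxyv e_ux e_xy e_yv]].
have odd_uv : odd (dist e u v).
  by rewrite (odd_dist_adj u e_yv) (odd_dist_adj u e_xy) (odd_dist_adj u e_ux) dist_refl.
have dist_uv_neq1 : dist e u v != 1.
  apply/eqP => dist1; have := walk_of_len_dist (e_conn u v); rewrite dist1.
  case/walk_of_lenP => s [s_size s_path s_last].
  case: s s_size s_path s_last => [|w [|]] //= _ /andP [e_uw _] w_v.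
  move: e_uw; rewrite w_v => e_uv.
  by move: (e_acyclic uniq_uxyv isT); rewrite /= e_ux e_xy e_yv e_sym e_uv.
move: odd_uv dist_uv_neq1; case: (dist e u v) => [|[|[|n]]] //.
Qed.

Lemma tree_P4_ends_diam : 0 < #|T| -> (exists u v, P4_ends e u v) <-> 3 <= diam e.
Proof.
move=> T_gt0; split=> [[u [v /P4_ends_dist dist_ge3]] | diam_ge3].
  exact: leq_trans dist_ge3 (dist_le_diam e u v).
have [u [v dist_uv]] := diam_attained e T_gt0.
have [w P4_uw] : exists w, P4_ends e u w.
  by apply: (P4_ends_of_dist (e_conn u v)); rewrite dist_uv.
by exists u, w.
Qed.

End Tree.

Section Colorings.

Variables (T : finType) (e : rel T).

Lemma ei_coloring1P :
  (exists f, ei_coloring e 1 f) <-> ~ exists u v, P4_ends e u v.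
Proof.
split=> [[f [f_range f_inj]] [u [v P4_uv]] | no_P4].
  by apply: (f_inj u v P4_uv); have := f_range u; have := f_range v; lia.
by exists (fun=> 1); split=> // u v P4_uv; case: no_P4; exists u, v.
Qed.

Lemma chi_ei_is1 : chi_ei_is e 1 <-> exists f, ei_coloring e 1 f.
Proof. by split=> [[] | col1] //; split. Qed.

Lemma chi_ei_is2 : (exists f, ei_coloring e 2 f) ->
  chi_ei_is e 2 <-> ~ exists f, ei_coloring e 1 f.
Proof.
move=> col2; split=> [[_ _ chi_min] /(chi_min 1 isT) // | no_col1].
by split=> // [[|[|j]]] // _ /no_col1.
Qed.

End Colorings.

Theorem proposition2p5 (T : finType) (e : rel T) :
  is_tree e ->
  (chi_ei_is e 1 <-> diam e <= 2) /\ (chi_ei_is e 2 <-> 3 <= diam e).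
Proof.
case=> [[e_sym e_irr] T_gt0 e_conn e_acyclic].
have P4_diam := tree_P4_ends_diam e_sym e_irr e_conn e_acyclic T_gt0.
have col1_diam : (exists f, ei_coloring e 1 f) <-> diam e <= 2.
  rewrite leqNgt; split=> [/ei_coloring1P no_P4 | /negP diam_lt3].
    by apply/negP => /P4_diam.
  by apply/ei_coloring1P => /P4_diam.
have [r _] := card_gt0P T_gt0.
have col2 : exists f, ei_coloring e 2 f.
  by exists (fun v => (odd (dist e r v)).+1); apply: parity_ei_coloring.
split; first exact: iff_trans (chi_ei_is1 e) col1_diam.
apply: iff_trans (chi_ei_is2 col2) _; rewrite ltnNge.
split=> [no_col1 | /negP diam_gt2 /col1_diam //].
by apply/negP => /col1_diam.
Qed.
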